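(* If $\mu\in\mathcal{L}$, then for each $x\in\mathbb{R}$ at most one element of the set $\{x+2\pi n : n\in\mathbb{Z}\}$ is an atom of $\mu$.
   Context: For a probability measure $\mu$ on $\mathbb{R}$, $G_\mu(z)=\int\frac{d\mu(x)}{z-x}$ and $F_\mu=1/G_\mu$ on the upper half-plane $\mathbb{C}^+$. $\mathcal{L}$ is the set of probability measures $\mu$ on $\mathbb{R}$ with $F_\mu(z+2\pi)=F_\mu(z)+2\pi$ for all $z\in\mathbb{C}^+$. *)

From HB Require Import structures.
From mathcomp Require Import all_boot all_order all_algebra.
From mathcomp Require Import all_classical all_reals all_analysis.
From mathcomp Require Import complex.
Set Implicit Arguments. Unset Strict Implicit. Unset Printing Implicit Defensive.
Import Order.TTheory GRing.Theory Num.Theory.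
Local Open Scope ring_scope.
Local Open Scope classical_set_scope.

(* Cauchy transform G_mu(z) = \int dmu(x) / (z - x), for z = a + i b:
   1/(z - x) = ((a - x) - i b) / ((a - x)^2 + b^2); the complex integral is
   taken componentwise (real and imaginary parts). *)
Definition cauchyG (R : realType) (mu : probability R R) (z : R[i]) : R[i] :=
  Complex
    (Rintegral mu setT (fun x : R =>
        ((@complex.Re R z) - x) / (((@complex.Re R z) - x) ^+ 2 + ((@complex.Im R z)) ^+ 2)))
    (Rintegral mu setT (fun x : R =>
        - (@complex.Im R z) / (((@complex.Re R z) - x) ^+ 2 + ((@complex.Im R z)) ^+ 2))).

Definition cauchyF (R : realType) (mu : probability R R) (z : R[i]) : R[i] :=
  (cauchyG mu z)^-1.

Definition classL (R : realType) (mu : probability R R) : Prop :=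
  forall z : R[i], 0 < (@complex.Im R z) ->
    cauchyF mu (z + (2 * pi)%:C%C) = cauchyF mu z + (2 * pi)%:C%C.

From HB Require Import structures.
From mathcomp Require Import all_boot all_order all_algebra.
From mathcomp Require Import all_classical all_reals all_analysis.
From mathcomp Require Import complex measurable_realfun ring lra.
Import Order.TTheory GRing.Theory Num.Theory numFieldNormedType.Exports.
Local Open Scope ring_scope.
Local Open Scope classical_set_scope.

(** An atom of mass [c] at [a] forces [Im G_mu(a + iy) <= - c / y], hence
   [|Re F_mu(a + iy)| <= y / (2 c)]: at height [y <= c], [Re F_mu] is within
   [1/2] of [0] above every atom. The functional equation of [L] shifts
   [Re F_mu(x + iy)] by exactly [2 pi n] from [x] to [x + 2 pi n], so atoms at
   [x + 2 pi n] and [x + 2 pi m] give [2 pi |n - m| <= 1], i.e. [n = m]. *)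

Section finite_measure_on_reals.
Context {R : realType} (mu : {finite_measure set R -> \bar R}).

Lemma Rintegral_le_atom (f : R -> R) (a : R) :
  mu.-integrable setT (EFin \o f) -> (forall x, f x <= 0) ->
  Rintegral mu setT f <= f a * fine (mu [set a]).
Proof.
move=> intf f_le0.
have int1 : mu.-integrable setT (EFin \o \1_[set a]) by exact: integrable_indic.
have -> : f a * fine (mu [set a]) =
    Rintegral mu setT (fun x => f a * \1_[set a] x).
  by rewrite RintegralZl // /Rintegral integral_indic // setIT.
apply: le_Rintegral => //.
  rewrite (_ : EFin \o _ = fun x => (f a)%:E * (\1_[set a] x)%:E)%E.
    exact: integrableZl.
  by apply/funext => x /=; rewrite EFinM.
move=> x _; rewrite /indic; have [/set_mem/= -> | _] := boolP (x \in [set a]).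
- by rewrite mulr1.
- by rewrite mulr0.
Qed.

Lemma continuous_Im_cauchy_kernel (a y : R) : y != 0 ->
  continuous (fun x : R => - y / ((a - x) ^+ 2 + y ^+ 2)).
Proof.
move=> y_neq0 t.
have denom_neq0 : (a - t) ^+ 2 + y ^+ 2 != 0.
  by rewrite paddr_eq0 ?sqr_ge0 // negb_and !sqrf_eq0 y_neq0 orbT.
have cont_diff : {for t, continuous (fun x : R => a - x)}.
  by apply: continuousB; [exact: cst_continuous | exact: cvg_id].
apply: (@continuousM _ _ (cst (- y)) (fun x => ((a - x) ^+ 2 + y ^+ 2)^-1)).
  exact: cst_continuous.
apply: continuousV => //.
apply: continuousD; last exact: cst_continuous.
exact: continuousM.
Qed.

Lemma integrable_Im_cauchy_kernel (a y : R) : 0 < y ->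
  mu.-integrable setT (EFin \o fun x => - y / ((a - x) ^+ 2 + y ^+ 2)).
Proof.
move=> y_gt0.
apply: measurable_bounded_integrable => //.
- exact: fin_num_fun_lty (fin_num_measure mu).
- apply: continuous_measurable_fun.
  exact: continuous_Im_cauchy_kernel (lt0r_neq0 y_gt0).
exists y^-1; split; rewrite ?num_real // => M /ltW M_ge x _ /=.
apply: le_trans M_ge.
have y2_gt0 : 0 < y ^+ 2 by exact: exprn_gt0.
have denom_ge : y ^+ 2 <= (a - x) ^+ 2 + y ^+ 2 by rewrite lerDr sqr_ge0.
rewrite normrM normrN normfV (gtr0_norm y_gt0) ger0_norm; last first.
  exact: le_trans (ltW y2_gt0) denom_ge.
have -> : y^-1 = y / y ^+ 2 by rewrite expr2 invfM mulrA divff ?mul1r ?gt_eqF.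
rewrite ler_pM2l // lef_pV2 ?posrE //.
exact: lt_le_trans denom_ge.
Qed.

End finite_measure_on_reals.

Lemma Im_cauchyG_le_atom (R : realType) (mu : probability R R) (a y : R) :
  0 < y -> complex.Im (cauchyG mu (Complex a y)) <= - fine (mu [set a]) / y.
Proof.
move=> y_gt0; rewrite /cauchyG /=.
apply: le_trans (Rintegral_le_atom mu _ a (integrable_Im_cauchy_kernel mu a y y_gt0) _) _.
  by move=> x; rewrite mulNr oppr_le0 divr_ge0 ?addr_ge0 ?sqr_ge0 ?ltW.
rewrite subrr expr0n add0r.
suff -> : - y / y ^+ 2 * fine (mu [set a]) = - fine (mu [set a]) / y by [].
by field; exact: lt0r_neq0.
Qed.

Lemma normr_Re_inv_le (R : rcfType) (w : R[i]) : complex.Im w != 0 ->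
  `|complex.Re w^-1| <= (2 * `|complex.Im w|)^-1.
Proof.
case: w => u v /= v_neq0.
have v_gt0 : 0 < `|v| by rewrite normr_gt0.
have s_gt0 : 0 < u ^+ 2 + v ^+ 2.
  by rewrite ltr_wpDl ?sqr_ge0 // exprn_even_gt0.
rewrite normrM normfV (gtr0_norm s_gt0) ler_pdivrMr // ler_pdivlMl ?mulr_gt0 //.
rewrite -[u ^+ 2]real_normK ?num_real // -[v ^+ 2]real_normK ?num_real //.
have := sqr_ge0 (`|u| - `|v|); lra.
Qed.

Lemma normr_Re_cauchyF_atom (R : realType) (mu : probability R R) (a y : R) :
  0 < y -> 0 < fine (mu [set a]) ->
  `|complex.Re (cauchyF mu (Complex a y))| <= y / (2 * fine (mu [set a])).
Proof.
move=> y_gt0 c_gt0.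
have ImG_le := Im_cauchyG_le_atom _ mu a y y_gt0.
have ImG_lt0 : complex.Im (cauchyG mu (Complex a y)) < 0.
  by apply: le_lt_trans ImG_le _; rewrite mulNr oppr_lt0 divr_gt0.
rewrite /cauchyF; apply: le_trans (normr_Re_inv_le _ _ (ltr0_neq0 ImG_lt0)) _.
set c := fine _ in c_gt0 ImG_le *; set g := complex.Im _ in ImG_le ImG_lt0 *.
have -> : y / (2 * c) = (2 * (c / y))^-1.
  by rewrite [in RHS]invfM invf_div invfM mulrCA.
rewrite (ltr0_norm ImG_lt0) lef_pV2 ?posrE ?mulr_gt0 ?divr_gt0 ?oppr_gt0 ?invr_gt0 //.
by rewrite ler_pM2l // lerNr -mulNr.
Qed.

Section equivariant_shift.
Context {R : rcfType} {F : R[i] -> R[i]} {p : R}.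
Local Open Scope complex_scope.
Hypothesis F_equivariant : forall z, 0 < complex.Im z -> F (z + p%:C) = F z + p%:C.

Let Im_addC (z : R[i]) (r : R) : complex.Im (z + r%:C) = complex.Im z.
Proof. by case: z => a b; rewrite /= addr0. Qed.

Lemma equivariant_natmul (k : nat) z : 0 < complex.Im z ->
  F (z + (p *+ k)%:C) = F z + (p *+ k)%:C.
Proof.
move=> z_gt0; elim: k => [|k IH]; first by rewrite mulr0n rmorph0 !addr0.
by rewrite mulrSr rmorphD addrA F_equivariant ?Im_addC // IH addrA.
Qed.

Lemma equivariant_intmul (k : int) z : 0 < complex.Im z ->
  F (z + (p *~ k)%:C) = F z + (p *~ k)%:C.
Proof.
move=> z_gt0; case: k => k; first exact: equivariant_natmul.
rewrite NegzE mulrNz rmorphN.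
have := equivariant_natmul k.+1 (z + (- (p *+ k.+1))%:C).
by rewrite Im_addC rmorphN subrK => ->; rewrite ?addrK.
Qed.

End equivariant_shift.

Theorem corollary4p13 (R : realType) (mu : probability R R) :
  classL mu ->
  forall x : R, forall n m : int,
    (0 < mu [set (x + 2 * pi * n%:~R)%R])%E ->
    (0 < mu [set (x + 2 * pi * m%:~R)%R])%E ->
    n = m.
Proof.
move=> hL x n m hn hm.
pose c (j : int) := fine (mu [set x + 2 * pi * j%:~R]).
have c_gt0 j : (0 < mu [set (x + 2 * pi * j%:~R)%R])%E -> 0 < c j.
  by move=> hj; rewrite fine_gt0 // hj (le_lt_trans (probability_le1 _ _)) ?ltry.
pose y := Num.min (c n) (c m).
have y_gt0 : 0 < y by rewrite lt_min !c_gt0.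
pose ReF (a : R) := complex.Re (cauchyF mu (Complex a y)).
have ReF_shift j : ReF (x + 2 * pi * j%:~R) = ReF x + 2 * pi * j%:~R.
  rewrite /ReF; have -> : Complex (x + 2 * pi * j%:~R) y =
      Complex x y + (2 * pi *~ j)%:C%C.
    by apply/eqP; rewrite eq_complex /= addr0 mulrzr !eqxx.
  rewrite (equivariant_intmul hL) //.
  by case: (cauchyF mu _) => u v; rewrite /= mulrzr.
have ReF_small j : (0 < mu [set (x + 2 * pi * j%:~R)%R])%E -> y <= c j ->
    `|ReF (x + 2 * pi * j%:~R)| <= 2^-1.
  move=> hj y_le.
  apply: le_trans (normr_Re_cauchyF_atom _ mu _ _ y_gt0 (c_gt0 j hj)) _.
  by rewrite invfM mulrCA ger_pMr ?invr_gt0 // ler_pdivrMr ?c_gt0 // mul1r.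
have : `|2 * pi * (n - m)%:~R| <= 1 :> R.
  rewrite intrB mulrBr.
  have -> : 2 * pi * n%:~R - 2 * pi * m%:~R =
      ReF (x + 2 * pi * n%:~R) - ReF (x + 2 * pi * m%:~R).
    by rewrite !ReF_shift opprD addrACA subrr add0r.
  apply: le_trans (ler_normB _ _) _.
  apply: le_trans (lerD (ReF_small n hn _) (ReF_small m hm _)) _;
    rewrite ?ge_min ?lexx ?orbT //.
  lra.
apply: contraTeq => n_neq_m; rewrite -ltNge.
have : 1 <= `|(n - m)%:~R| :> R.
  by rewrite -intr_norm ler1z -gtz0_ge1 normr_gt0 subr_eq0.
rewrite normrM (ger0_norm (mulr_ge0 _ (pi_ge0 R))) //.
have := pi_ge2 R; nra.
Qed.
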